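(* Consider the model below with $M=M_f=N=1$ (full-information rational expectations) and $\epsilon_2\ge 0$, and fix all parameters other than $\epsilon_1$. Then there exists $\bar{\epsilon}_{REE}\in[-\infty,\infty)$, depending only on $(\beta,\sigma,\lambda,\mu,\psi,p,q,\epsilon_2)$, such that for every $\epsilon_1\in\mathbb{R}$ a rational expectations equilibrium (REE) exists if and only if $\epsilon_1\ge\bar{\epsilon}_{REE}$.
   Context: Parameters: $0<\beta<1$, $\sigma>0$, $\lambda>0$, $\mu>0$, $\psi>1$, $p,q\in(0,1]$. The demand shock $\epsilon_t$ is a two-state Markov chain on $\{\epsilon_1,\epsilon_2\}\subset\mathbb{R}$ with $\Pr(\epsilon_{t+1}=\epsilon_1\mid\epsilon_t=\epsilon_1)=p$, $\Pr(\epsilon_{t+1}=\epsilon_2\mid\epsilon_t=\epsilon_2)=q$. The model (with discount parameters $M,M_f,N\in(0,1]$) is $x_t=M\hat E_t x_{t+1}-\sigma(i_t-N\hat E_t\pi_{t+1})+\epsilon_t$, $\pi_t=\lambda x_t+M_f\beta\hat E_t\pi_{t+1}$, $i_t=\max\{\psi\pi_t,-\mu\}$, where $x_t$ is the output gap, $\pi_t$ inflation, $i_t$ the nominal rate. An REE (with $M=M_f=N=1$) is a pair $Y_j=(x_j,\pi_j)\in\mathbb{R}^2$, $j=1,2$ (the values of $(x_t,\pi_t)$ when $\epsilon_t=\epsilon_j$), such that for $j=1,2$, with $i_j=\max\{\psi\pi_j,-\mu\}$: $x_j=x^e_j-\sigma(i_j-\pi^e_j)+\epsilon_j$ and $\pi_j=\lambda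 x_j+\beta\pi^e_j$, where $(x^e_1,\pi^e_1)=pY_1+(1-p)Y_2$ and $(x^e_2,\pi^e_2)=(1-q)Y_1+qY_2$ (the Markov conditional expectations). *)

From Stdlib Require Import Reals.
Open Scope R_scope.

(* Taylor rule with effective lower bound: i = max{psi*pi, -mu}. *)
Definition policy_rate (psi mu pi : R) : R := Rmax (psi * pi) (- mu).

(* (x1,pi1,x2,pi2) is a rational expectations equilibrium (M = M_f = N = 1)
   of the two-state Markov model with shocks eps1, eps2 and persistence p, q. *)
Definition is_REE (beta sigma lambda mu psi p q eps1 eps2 : R)
  (x1 pi1 x2 pi2 : R) : Prop :=
  let xe1 := p * x1 + (1 - p) * x2 in
  let pie1 := p * pi1 + (1 - p) * pi2 in
  let xe2 := (1 - q) * x1 + q * x2 in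
  let pie2 := (1 - q) * pi1 + q * pi2 in
  x1 = xe1 - sigma * (policy_rate psi mu pi1 - pie1) + eps1 /\
  pi1 = lambda * x1 + beta * pie1 /\
  x2 = xe2 - sigma * (policy_rate psi mu pi2 - pie2) + eps2 /\
  pi2 = lambda * x2 + beta * pie2.

Definition REE_exists (beta sigma lambda mu psi p q eps1 eps2 : R) : Prop :=
  exists x1 pi1 x2 pi2 : R,
    is_REE beta sigma lambda mu psi p q eps1 eps2 x1 pi1 x2 pi2.

(* A threshold in [-oo, +oo): None encodes -oo, Some b the real b. *)
Definition ge_threshold (e : R) (t : option R) : Prop :=
  match t with None => True | Some b => b <= e end.

From Stdlib Require Import Reals Lra Psatz.
Open Scope R_scope.

(* Eliminating output with the Phillips curve turns an REE into two equations
   in (pi1, pi2) involving G(pi) = sigma (i(pi) - pi), a maximum of two affine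
   maps bounded below by sigma (psi - 1) pi.  If q < 1, the second equation
   gives pi1 as a function of pi2 and the first then reads eps1 = h(pi2).  If
   q = 1, it only forces G(pi2) = eps2; the largest root r = eps2 / (sigma (psi - 1))
   minimises eps1 over the roots, so the admissible eps1 are the values of
   phi(pi1) = G(pi1) + c (pi1 - r), c >= 0, and everything above them.  Either
   way they form the image of a continuous function that tends to +oo and is a
   maximum of two affine maps near -oo, and such an image is R or a closed
   half-line [ebar, +oo). *)

Lemma continuity_ext (f g : R -> R) :
  (forall t, f t = g t) -> continuity f -> continuity g.
Proof.
  intros Hfg Hf x.
  apply continuity_pt_locally_ext with (a := 1) (f := f); [lra | intros y _; apply Hfg | apply Hf].
Qed.

Lemma continuity_affine_comp (f : R -> R) (a b : R) :
  continuity f -> continuity (fun t => a * f t + b).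
Proof.
  intros Hf.
  apply (continuity_plus (fun t => a * f t) (fun _ => b)).
  - now apply (continuity_scal f a).
  - now apply continuity_const.
Qed.

Lemma continuity_affine (a b : R) : continuity (fun t => a * t + b).
Proof. apply (continuity_affine_comp id), derivable_continuous, derivable_id. Qed.

Lemma continuity_Rmax (f g : R -> R) :
  continuity f -> continuity g -> continuity (fun t => Rmax (f t) (g t)).
Proof.
  intros Hf Hg.
  apply continuity_ext with (f := fun t => /2 * (f t + g t + Rabs (f t - g t)) + 0).
  { intro t. unfold Rmax, Rabs. destruct Rle_dec, Rcase_abs; lra. }
  apply (continuity_affine_comp (fun t => f t + g t + Rabs (f t - g t))).
  apply (continuity_plus (fun t => f t + g t) (fun t => Rabs (f t - g t))).
  - now apply (continuity_plus f g).
  - apply (continuity_comp (fun t => f t - g t) Rabs).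
    + now apply (continuity_minus f g).
    + apply Rcontinuity_abs.
Qed.

Definition max_affine (a1 b1 a2 b2 t : R) : R := Rmax (a1 * t + b1) (a2 * t + b2).

Lemma continuity_max_affine (a1 b1 a2 b2 : R) : continuity (max_affine a1 b1 a2 b2).
Proof. apply (continuity_Rmax (fun t => a1 * t + b1)); apply continuity_affine. Qed.

Lemma max_affine_comm (a1 b1 a2 b2 t : R) :
  max_affine a1 b1 a2 b2 t = max_affine a2 b2 a1 b1 t.
Proof. apply Rmax_comm. Qed.

Lemma max_affine_shift (c d a1 b1 a2 b2 t : R) :
  c * t + d + max_affine a1 b1 a2 b2 t = max_affine (c + a1) (d + b1) (c + a2) (d + b2) t.
Proof. unfold max_affine, Rmax. destruct Rle_dec, Rle_dec; lra. Qed.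

Lemma max_affine_comp_affine (c d a1 b1 a2 b2 t : R) :
  max_affine a1 b1 a2 b2 (c * t + d) =
  max_affine (a1 * c) (a1 * d + b1) (a2 * c) (a2 * d + b2) t.
Proof. unfold max_affine. f_equal; ring. Qed.

Lemma max_affine_nonincreasing_tail (a1 b1 a2 b2 s : R) : a1 <= 0 ->
  exists s', s' <= s /\
    forall t, t <= s' -> max_affine a1 b1 a2 b2 s' <= max_affine a1 b1 a2 b2 t.
Proof.
  intros Ha1. unfold max_affine.
  destruct (Rle_dec a2 0) as [Ha2 | Ha2].
  - exists s. split; [lra |]. intros t Ht. apply Rmax_lub.
    + apply Rle_trans with (a1 * t + b1); [nra | apply Rmax_l].
    + apply Rle_trans with (a2 * t + b2); [nra | apply Rmax_r].
  - set (c := (b1 - b2) / (a2 - a1)).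
    assert (Hfirst : forall t, t <= c -> Rmax (a1 * t + b1) (a2 * t + b2) = a1 * t + b1).
    { intros t Ht. apply Rmax_left.
      assert ((a2 - a1) * t <= (a2 - a1) * c) by (apply Rmult_le_compat_l; lra).
      assert ((a2 - a1) * c = b1 - b2) by (unfold c; field; lra).
      lra. }
    exists (Rmin s c). split; [apply Rmin_l |]. intros t Ht.
    pose proof (Rmin_r s c).
    rewrite !Hfirst by lra. nra.
Qed.

Lemma max_affine_left_tail (a1 b1 a2 b2 s : R) :
  (forall y, exists t, t <= s /\ max_affine a1 b1 a2 b2 t <= y) \/
  (exists s', s' <= s /\
    forall t, t <= s' -> max_affine a1 b1 a2 b2 s' <= max_affine a1 b1 a2 b2 t).
Proof.
  destruct (Rle_dec a1 0) as [Ha1 | Ha1].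
  { right. now apply max_affine_nonincreasing_tail. }
  destruct (Rle_dec a2 0) as [Ha2 | Ha2].
  { right. destruct (max_affine_nonincreasing_tail a2 b2 a1 b1 s Ha2) as [s' [Hs' Hmono]].
    exists s'. split; [exact Hs' |]. intros t Ht. rewrite !(max_affine_comm a1). auto. }
  left. intro y.
  exists (Rmin s (Rmin ((y - b1) / a1) ((y - b2) / a2))).
  set (t := Rmin s _).
  assert (Ht1 : t <= (y - b1) / a1) by (eapply Rle_trans; [apply Rmin_r | apply Rmin_l]).
  assert (Ht2 : t <= (y - b2) / a2) by (eapply Rle_trans; [apply Rmin_r | apply Rmin_r]).
  assert (a1 * t <= a1 * ((y - b1) / a1)) by (apply Rmult_le_compat_l; lra).
  assert (a2 * t <= a2 * ((y - b2) / a2)) by (apply Rmult_le_compat_l; lra).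
  assert (a1 * ((y - b1) / a1) = y - b1) by (field; lra).
  assert (a2 * ((y - b2) / a2) = y - b2) by (field; lra).
  split; [apply Rmin_l |]. apply Rmax_lub; lra.
Qed.

Definition diverges_pinfty (f : R -> R) : Prop :=
  forall y, exists T, forall t, T <= t -> y <= f t.

Definition max_affine_near_minfty (f : R -> R) : Prop :=
  exists s a1 b1 a2 b2, forall t, t <= s -> f t = max_affine a1 b1 a2 b2 t.

Lemma diverges_pinfty_of_linear_minorant (f : R -> R) (D C : R) :
  0 < D -> (forall t, D * t - C <= f t) -> diverges_pinfty f.
Proof.
  intros HD Hf y. exists ((y + C) / D). intros t Ht.
  assert (D * ((y + C) / D) <= D * t) by (apply Rmult_le_compat_l; lra).
  assert (D * ((y + C) / D) = y + C) by (field; lra).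
  specialize (Hf t). lra.
Qed.

Lemma continuity_hits_above (f : R -> R) (x0 y : R) :
  continuity f -> diverges_pinfty f -> f x0 <= y -> exists t, f t = y.
Proof.
  intros Hf Hdiv Hx0.
  destruct (Hdiv y) as [T HT].
  destruct (IVT_cor (fun t => f t - y) x0 (Rmax x0 T)) as [t [_ Ht]].
  - apply (continuity_minus f (fun _ => y)); [exact Hf | now apply continuity_const].
  - apply Rmax_l.
  - pose proof (HT (Rmax x0 T) (Rmax_r x0 T)). nra.
  - exists t. lra.
Qed.

Lemma continuity_attains_inf (f : R -> R) (s : R) :
  continuity f -> diverges_pinfty f -> (forall t, t <= s -> f s <= f t) ->
  exists xm, forall t, f xm <= f t.
Proof.
  intros Hf Hdiv Hleft.
  destruct (Hdiv (f s)) as [T HT].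
  destruct (continuity_ab_min f s (Rmax s T) (Rmax_l s T)) as [xm [Hmin _]].
  { intros c _. apply Hf. }
  assert (Hxm_s : f xm <= f s) by (apply Hmin; pose proof (Rmax_l s T); lra).
  exists xm. intro t.
  destruct (Rle_dec t s); [apply Rle_trans with (f s); auto |].
  destruct (Rle_dec t (Rmax s T)); [apply Hmin; lra |].
  apply Rle_trans with (f s); [exact Hxm_s |]. apply HT.
  pose proof (Rmax_r s T). lra.
Qed.

Lemma continuity_image_threshold (f : R -> R) :
  continuity f -> diverges_pinfty f -> max_affine_near_minfty f ->
  exists e, forall y, (exists t, f t = y) <-> ge_threshold y e.
Proof.
  intros Hf Hdiv [s [a1 [b1 [a2 [b2 Htail]]]]].
  destruct (max_affine_left_tail a1 b1 a2 b2 s) as [Hunb | [s' [Hs' Hmono]]].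
  - exists None. intro y. split; [now intros _ |]. intros _.
    destruct (Hunb y) as [t [Ht Hy]].
    apply (continuity_hits_above f t); [exact Hf | exact Hdiv |].
    now rewrite Htail.
  - destruct (continuity_attains_inf f s') as [xm Hxm]; [exact Hf | exact Hdiv | |].
    { intros t Ht. rewrite !Htail by lra. auto. }
    exists (Some (f xm)). intro y. simpl. split.
    + intros [t <-]. apply Hxm.
    + intro Hy. exact (continuity_hits_above f xm y Hf Hdiv Hy).
Qed.

Definition rate_gap (sigma psi mu pi : R) : R := sigma * (policy_rate psi mu pi - pi).

Lemma rate_gap_max_affine (sigma psi mu t : R) : 0 <= sigma ->
  rate_gap sigma psi mu t = max_affine (sigma * (psi - 1)) 0 (- sigma) (- sigma * mu) t.
Proof.
  intros Hsigma. unfold rate_gap, policy_rate, max_affine, Rmax.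
  destruct Rle_dec, Rle_dec; nra.
Qed.

Lemma rate_gap_ge (sigma psi mu t : R) : 0 <= sigma ->
  sigma * (psi - 1) * t <= rate_gap sigma psi mu t.
Proof.
  intros Hsigma. rewrite rate_gap_max_affine by exact Hsigma.
  unfold max_affine. rewrite Rplus_0_r. apply Rmax_l.
Qed.

Lemma rate_gap_at_bound (sigma psi mu t : R) : psi * t <= - mu ->
  rate_gap sigma psi mu t = - sigma * t - sigma * mu.
Proof. intros Ht. unfold rate_gap, policy_rate. rewrite Rmax_right by exact Ht. ring. Qed.

Lemma continuity_rate_gap (sigma psi mu : R) : 0 <= sigma -> continuity (rate_gap sigma psi mu).
Proof.
  intros Hsigma. apply continuity_ext with (f := max_affine (sigma * (psi - 1)) 0 (- sigma) (- sigma * mu)).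
  - intro t. symmetry. now apply rate_gap_max_affine.
  - apply continuity_max_affine.
Qed.

(* By the Phillips curve, lambda (x1 - x2) = (1 - beta (p + q - 1)) (pi1 - pi2). *)
Definition kappa (beta sigma lambda p q : R) : R := 1 - beta * (p + q - 1) + sigma * lambda.

Lemma kappa_pos (beta sigma lambda p q : R) :
  0 <= beta < 1 -> 0 <= sigma * lambda -> p <= 1 -> q <= 1 ->
  0 < kappa beta sigma lambda p q.
Proof. intros. unfold kappa. nra. Qed.

Definition reduced_REE (beta sigma lambda mu psi p q eps1 eps2 pi1 pi2 : R) : Prop :=
  lambda * (eps1 - rate_gap sigma psi mu pi1) =
    (1 - p) * kappa beta sigma lambda p q * (pi1 - pi2) /\
  lambda * (eps2 - rate_gap sigma psi mu pi2) =
    (1 - q) * kappa beta sigma lambda p q * (pi2 - pi1).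

Lemma REE_exists_iff_reduced (beta sigma lambda mu psi p q eps1 eps2 : R) : 0 < lambda ->
  REE_exists beta sigma lambda mu psi p q eps1 eps2 <->
  exists pi1 pi2, reduced_REE beta sigma lambda mu psi p q eps1 eps2 pi1 pi2.
Proof.
  intros Hlambda. unfold REE_exists, is_REE, reduced_REE, kappa, rate_gap. split.
  - intros [x1 [pi1 [x2 [pi2 [E1 [E2 [E3 E4]]]]]]]. exists pi1, pi2.
    set (i1 := policy_rate psi mu pi1) in *. set (i2 := policy_rate psi mu pi2) in *.
    pose proof (f_equal (Rmult lambda) E1). pose proof (f_equal (Rmult lambda) E3).
    pose proof (f_equal (Rmult (1 - p)) E2). pose proof (f_equal (Rmult (1 - p)) E4).
    pose proof (f_equal (Rmult (1 - q)) E2). pose proof (f_equal (Rmult (1 - q)) E4).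
    split; lra.
  - intros [pi1 [pi2 [R1 R2]]].
    set (x1 := (pi1 - beta * (p * pi1 + (1 - p) * pi2)) / lambda).
    set (x2 := (pi2 - beta * ((1 - q) * pi1 + q * pi2)) / lambda).
    assert (Hx1 : lambda * x1 = pi1 - beta * (p * pi1 + (1 - p) * pi2)) by (unfold x1; field; lra).
    assert (Hx2 : lambda * x2 = pi2 - beta * ((1 - q) * pi1 + q * pi2)) by (unfold x2; field; lra).
    exists x1, pi1, x2, pi2.
    set (i1 := policy_rate psi mu pi1) in *. set (i2 := policy_rate psi mu pi2) in *.
    pose proof (f_equal (Rmult (1 - p)) Hx1). pose proof (f_equal (Rmult (1 - p)) Hx2).
    pose proof (f_equal (Rmult (1 - q)) Hx1). pose proof (f_equal (Rmult (1 - q)) Hx2).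
    split; [| split; [| split]]; try lra; apply (Rmult_eq_reg_l lambda); lra.
Qed.

Section Threshold.

Variables beta sigma lambda mu psi p q eps2 : R.
Hypotheses (Hbeta : 0 < beta < 1) (Hsigma : 0 < sigma) (Hlambda : 0 < lambda)
  (Hmu : 0 < mu) (Hpsi : 1 < psi) (Hp : 0 < p <= 1).

Let G := rate_gap sigma psi mu.
Let K := kappa beta sigma lambda p q.
Let reduced := reduced_REE beta sigma lambda mu psi p q.

Section Transient.

Hypothesis Hq1 : q < 1.

Let pi1_of (pi2 : R) : R := pi2 + lambda / ((1 - q) * K) * (G pi2 - eps2).
Let eps1_of (pi2 : R) : R := (1 - p) / (1 - q) * (G pi2 - eps2) + G (pi1_of pi2).

Lemma reduced_transient_iff (eps1 pi1 pi2 : R) :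
  reduced eps1 eps2 pi1 pi2 <-> pi1 = pi1_of pi2 /\ eps1 = eps1_of pi2.
Proof.
  assert (HK : 0 < K) by (apply kappa_pos; nra).
  unfold reduced, reduced_REE, eps1_of, pi1_of. fold G K. split.
  - intros [E1 E2].
    assert (Hpi1 : pi1 = pi2 + lambda / ((1 - q) * K) * (G pi2 - eps2)).
    { apply (Rmult_eq_reg_l ((1 - q) * K)); [| nra].
      replace ((1 - q) * K * (pi2 + lambda / ((1 - q) * K) * (G pi2 - eps2)))
        with ((1 - q) * K * pi2 + lambda * (G pi2 - eps2)) by (field; lra).
      lra. }
    split; [exact Hpi1 |]. rewrite <- Hpi1.
    apply (Rmult_eq_reg_l (lambda * (1 - q))); [| nra].
    replace (lambda * (1 - q) * ((1 - p) / (1 - q) * (G pi2 - eps2) + G pi1))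
      with (lambda * (1 - p) * (G pi2 - eps2) + lambda * (1 - q) * G pi1) by (field; lra).
    pose proof (f_equal (Rmult (1 - q)) E1). pose proof (f_equal (Rmult (1 - p)) E2).
    lra.
  - intros [-> ->]. split; field; lra.
Qed.

Lemma continuity_eps1_of_transient : continuity eps1_of.
Proof.
  pose proof (continuity_rate_gap sigma psi mu (Rlt_le _ _ Hsigma)) as HG. fold G in HG.
  apply (continuity_plus (fun t => (1 - p) / (1 - q) * (G t - eps2)) (fun t => G (pi1_of t))).
  - apply continuity_ext with (f := fun t => (1 - p) / (1 - q) * G t + - ((1 - p) / (1 - q) * eps2)).
    + intro t. ring.
    + now apply continuity_affine_comp.
  - apply (continuity_comp pi1_of G); [| exact HG].
    apply (continuity_plus id (fun t => lambda / ((1 - q) * K) * (G t - eps2))).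
    + apply derivable_continuous, derivable_id.
    + apply continuity_ext
        with (f := fun t => lambda / ((1 - q) * K) * G t + - (lambda / ((1 - q) * K) * eps2)).
      * intro t. ring.
      * now apply continuity_affine_comp.
Qed.

Lemma eps1_of_transient_diverges : diverges_pinfty eps1_of.
Proof.
  assert (HK : 0 < K) by (apply kappa_pos; nra).
  set (m := sigma * (psi - 1)). set (r1 := (1 - p) / (1 - q)). set (r2 := lambda / ((1 - q) * K)).
  assert (Hm : 0 < m) by (unfold m; nra).
  assert (Hr1 : 0 <= r1) by (unfold r1; apply Rmult_le_pos; [lra | left; apply Rinv_0_lt_compat; lra]).
  assert (Hr2 : 0 < r2) by (unfold r2; apply Rmult_lt_0_compat; [lra | apply Rinv_0_lt_compat; nra]).
  apply (diverges_pinfty_of_linear_minorant _ (m * (1 + r1 + r2 * m)) ((r1 + m * r2) * eps2)).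
  { nra. }
  intro t. unfold eps1_of, pi1_of. fold r1 r2.
  pose proof (rate_gap_ge sigma psi mu t (Rlt_le _ _ Hsigma)) as G1.
  pose proof (rate_gap_ge sigma psi mu (t + r2 * (G t - eps2)) (Rlt_le _ _ Hsigma)) as G2.
  fold G m in G1, G2.
  assert (r1 * (m * t) <= r1 * G t) by (apply Rmult_le_compat_l; lra).
  assert (m * r2 * (m * t) <= m * r2 * G t) by (apply Rmult_le_compat_l; nra).
  lra.
Qed.

Lemma eps1_of_transient_near_minfty : max_affine_near_minfty eps1_of.
Proof.
  set (r1 := (1 - p) / (1 - q)). set (r2 := lambda / ((1 - q) * K)).
  eexists (- mu / psi), _, _, _, _. intros t Ht.
  assert (Hbound : psi * t <= - mu).
  { apply Rmult_le_compat_l with (r := psi) in Ht; [| lra].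
    replace (psi * (- mu / psi)) with (- mu) in Ht by (field; lra). exact Ht. }
  assert (HGt : G t = - sigma * t - sigma * mu) by now apply rate_gap_at_bound.
  unfold eps1_of, pi1_of. fold r1 r2. rewrite HGt.
  replace (t + r2 * (- sigma * t - sigma * mu - eps2))
    with ((1 - r2 * sigma) * t + - r2 * (sigma * mu + eps2)) by ring.
  unfold G. rewrite rate_gap_max_affine, max_affine_comp_affine by lra.
  replace (r1 * (- sigma * t - sigma * mu - eps2))
    with (- r1 * sigma * t + - r1 * (sigma * mu + eps2)) by ring.
  rewrite max_affine_shift. reflexivity.
Qed.

Lemma REE_threshold_transient : exists ebar : option R, forall eps1,
  REE_exists beta sigma lambda mu psi p q eps1 eps2 <-> ge_threshold eps1 ebar.
Proof.
  destruct (continuity_image_threshold eps1_of) as [e He].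
  - exact continuity_eps1_of_transient.
  - exact eps1_of_transient_diverges.
  - exact eps1_of_transient_near_minfty.
  - exists e. intro eps1. rewrite REE_exists_iff_reduced, <- He by exact Hlambda. split.
    + intros [pi1 [pi2 Hred]]. apply reduced_transient_iff in Hred as [_ ->]. now exists pi2.
    + intros [pi2 <-]. exists (pi1_of pi2), pi2. now apply reduced_transient_iff.
Qed.

End Transient.

Section Absorbing.

Hypotheses (Hq1 : q = 1) (Heps2 : 0 <= eps2).

Let pi2_max : R := eps2 / (sigma * (psi - 1)).
Let slope : R := (1 - p) * K / lambda.
Let eps1_of (pi1 : R) : R := G pi1 + slope * (pi1 - pi2_max).

Lemma rate_gap_pi2_max : G pi2_max = eps2.
Proof.
  assert (0 <= pi2_max) by (apply Rmult_le_pos; [lra | left; apply Rinv_0_lt_compat; nra]).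
  unfold G, rate_gap, policy_rate. rewrite Rmax_left by nra.
  unfold pi2_max. field. lra.
Qed.

Lemma rate_gap_root_le (t : R) : G t = eps2 -> t <= pi2_max.
Proof.
  intros Ht. pose proof (rate_gap_ge sigma psi mu t (Rlt_le _ _ Hsigma)) as HGt. fold G in HGt.
  apply (Rmult_le_reg_l (sigma * (psi - 1))); [nra |].
  replace (sigma * (psi - 1) * pi2_max) with eps2 by (unfold pi2_max; field; lra).
  lra.
Qed.

Lemma reduced_absorbing_iff (eps1 pi1 pi2 : R) :
  reduced eps1 eps2 pi1 pi2 <->
  G pi2 = eps2 /\ eps1 = eps1_of pi1 + slope * (pi2_max - pi2).
Proof.
  unfold reduced, reduced_REE, eps1_of, slope. fold G K. rewrite Hq1. split.
  - intros [E1 E2]. split; [nra |].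
    apply (Rmult_eq_reg_l lambda); [| lra].
    replace (lambda * (G pi1 + (1 - p) * K / lambda * (pi1 - pi2_max)
               + (1 - p) * K / lambda * (pi2_max - pi2)))
      with (lambda * G pi1 + (1 - p) * K * (pi1 - pi2)) by (field; lra).
    lra.
  - intros [HG ->]. rewrite HG. split; [field; lra | ring].
Qed.

Lemma slope_nonneg : 0 <= slope.
Proof.
  assert (HK : 0 < K) by (apply kappa_pos; nra).
  apply Rmult_le_pos; [nra | left; apply Rinv_0_lt_compat; lra].
Qed.

Lemma continuity_eps1_of_absorbing : continuity eps1_of.
Proof.
  apply (continuity_plus G (fun t => slope * (t - pi2_max))).
  - now apply continuity_rate_gap, Rlt_le.
  - apply continuity_ext with (f := fun t => slope * t + - (slope * pi2_max)).
    + intro t. ring.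
    + apply continuity_affine.
Qed.

Lemma eps1_of_absorbing_diverges : diverges_pinfty eps1_of.
Proof.
  pose proof slope_nonneg.
  apply (diverges_pinfty_of_linear_minorant _ (sigma * (psi - 1) + slope) (slope * pi2_max)).
  { nra. }
  intro t. pose proof (rate_gap_ge sigma psi mu t (Rlt_le _ _ Hsigma)).
  unfold eps1_of, G. lra.
Qed.

Lemma eps1_of_absorbing_near_minfty : max_affine_near_minfty eps1_of.
Proof.
  eexists 0, _, _, _, _. intros t _.
  unfold eps1_of, G. rewrite rate_gap_max_affine by lra.
  replace (slope * (t - pi2_max)) with (slope * t + - (slope * pi2_max)) by ring.
  rewrite Rplus_comm, max_affine_shift. reflexivity.
Qed.

Lemma REE_threshold_absorbing : exists ebar : option R, forall eps1,
  REE_exists beta sigma lambda mu psi p q eps1 eps2 <-> ge_threshold eps1 ebar.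
Proof.
  destruct (continuity_image_threshold eps1_of) as [e He].
  - exact continuity_eps1_of_absorbing.
  - exact eps1_of_absorbing_diverges.
  - exact eps1_of_absorbing_near_minfty.
  - exists e. intro eps1. rewrite REE_exists_iff_reduced by exact Hlambda. split.
    + intros [pi1 [pi2 Hred]]. apply reduced_absorbing_iff in Hred as [Hroot ->].
      assert (Hge : ge_threshold (eps1_of pi1) e) by (apply He; now exists pi1).
      pose proof (rate_gap_root_le pi2 Hroot). pose proof slope_nonneg.
      destruct e; simpl in *; [nra | trivial].
    + intros Hge. apply He in Hge as [pi1 <-]. exists pi1, pi2_max.
      apply reduced_absorbing_iff. split; [exact rate_gap_pi2_max | ring].
Qed.

End Absorbing.

End Threshold.

Theorem proposition1 :
  forall (beta sigma lambda mu psi p q eps2 : R),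
    0 < beta < 1 -> 0 < sigma -> 0 < lambda -> 0 < mu -> 1 < psi ->
    0 < p <= 1 -> 0 < q <= 1 -> 0 <= eps2 ->
    exists ebar : option R,
      forall eps1 : R,
        REE_exists beta sigma lambda mu psi p q eps1 eps2 <->
        ge_threshold eps1 ebar.
Proof.
  intros beta sigma lambda mu psi p q eps2 Hbeta Hsigma Hlambda Hmu Hpsi Hp [_ Hq] Heps2.
  destruct (Rle_lt_or_eq_dec q 1 Hq) as [Hq1 | Hq1].
  - now apply REE_threshold_transient.
  - now apply REE_threshold_absorbing.
Qed.
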